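(* Let $q$ be a prime power, $m\ge1$, $1\le k\le n$, $g_1,\dots,g_n\in\mathbb{F}_{q^m}$ linearly independent over $\mathbb{F}_q$, $\mathbf g=(g_1,\dots,g_n)$, $\mathbf r=(r_1,\dots,r_n)\in\mathbb{F}_{q^m}^n$. Then Algorithm 3 (described in the context) has computational complexity order $\mathcal{O}_{q^m}(n^2)$.
   Context: Write $[i]:=q^i$. A $q$-linearized polynomial is $f(x)=\sum_{i=0}^{d}a_ix^{[i]}$, $a_i\in\mathbb{F}_{q^m}$; if $a_d\ne0$, $d=\mathrm{qdeg}(f)$ ($\mathrm{qdeg}(0)=-\infty$). $\mathcal{L}_q(x,q^m)$ is the ring of these under addition and composition $\circ$. Composition of $2\times2$ matrices over $\mathcal{L}_q(x,q^m)$ is defined like matrix multiplication with products replaced by composition. Algorithm 3 (input $k,\mathbf g,\mathbf r$): $B_0=\begin{bmatrix}x&0\\0&x\end{bmatrix}$; writing $B_i=\begin{bmatrix}P_i&-K_i\\N_i&-D_i\end{bmatrix}$, for $i=1,\dots,n$: $\Gamma_i:=P_{i-1}(g_i)-K_{i-1}(r_i)$, $\Delta_i:=N_{i-1}(g_i)-D_{i-1}(r_i)$; if [$\mathrm{qdeg}(P_{i-1})\le\mathrm{qdeg}(D_{i-1})+k-1$ and $\Gamma_i\ne0$] or $\Delta_i=0$, then $B_i:=\begin{bmatrix}x^q-\Gamma_i^{q-1}x&0\\\Delta_ix&-\Gamma_ix\end{bmatrix}\circ B_{i-1}$; else $B_i:=\begin{bmatrix}\Delta_ix&-\Gamma_ix\\0&x^q-\Delta_i^{q-1}x\end{bmatrix}\circ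 B_{i-1}$. Return $B_n$. Complexity conventions: elements of $\mathbb{F}_{q^m}$ are stored w.r.t. a normal basis of $\mathbb{F}_{q^m}$ over $\mathbb{F}_q$, so $q$-th powers are free; $\mathcal{O}_{q^m}(\cdot)$ counts arithmetic operations in $\mathbb{F}_{q^m}$. *)

From mathcomp Require Import all_boot all_order all_algebra all_field.
Set Implicit Arguments. Unset Strict Implicit. Unset Printing Implicit Defensive.
Import GRing.Theory.
Local Open Scope ring_scope.

(* Setting: K = F_q (a finite field with q := #|K| elements, q a prime power),
   L = F_{q^m} a finite-dimensional field extension of K, m = \dim_K L >= 1.
   Elements of L are assumed stored w.r.t. a normal basis, so the q-Frobenius
   x |-> x^q (and its iterates) costs nothing; every other arithmetic operation
   in L (+, -, negation, *, inversion) costs 1.  Zero tests and q-degree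
   comparisons are not field arithmetic and cost nothing. *)

Section Algorithm3.
Variables (K : finFieldType) (L : fieldExtType K).

Definition frob (x : L) : L := x ^+ #|K|.
Definition frobn (i : nat) (x : L) : L := iter i frob x.

(* A q-linearized polynomial sum_i a_i x^[i] is stored as its coefficient
   sequence [:: a_0; a_1; ...; a_d] (trailing zeros allowed). *)
Definition lpoly := seq L.

(* q-degree, with None standing for -oo (the zero polynomial) *)
Definition qdeg (f : lpoly) : option nat :=
  if size (Poly f) is d.+1 then Some d else None.

Definition qdeg_le_shift (f h : lpoly) (k : nat) : bool :=
  match qdeg f, qdeg h with
  | None, _ => true
  | Some _, None => false
  | Some a, Some b => (a <= b + k - 1)%N
  end.

Definition lp_eval (f : lpoly) (y : L) : L :=
  \sum_(i < size f) f`_i * frobn i y.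
Definition cost_eval (f : lpoly) : nat := (size f + (size f).-1)%N.

(* composition (f o h)(x) = f(h(x)), coefficient j = sum_i f_i h_{j-i}^[i] *)
Definition lp_size_comp (f h : lpoly) : nat :=
  if (size f == 0%N) || (size h == 0%N) then 0%N else (size f + size h).-1.
Definition lp_comp (f h : lpoly) : lpoly :=
  mkseq (fun j => \sum_(i < size f)
                    (if (i <= j)%N then f`_i * frobn i h`_(j - i) else 0))
        (lp_size_comp f h).
(* schoolbook cost: one mult per pair, (#pairs - #output coeffs) adds *)
Definition cost_comp (f h : lpoly) : nat :=
  (size f * size h + (size f * size h - lp_size_comp f h))%N.

Definition lp_add (f h : lpoly) : lpoly :=
  mkseq (fun j => f`_j + h`_j) (maxn (size f) (size h)).
Definition cost_add (f h : lpoly) : nat := minn (size f) (size h).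

(* 2x2 matrices over L_q(x, q^m): entries (b11, b12, b21, b22) *)
Definition lmat := (lpoly * lpoly * lpoly * lpoly)%type.

Definition lmat_comp (A B : lmat) : lmat :=
  let: (a11, a12, a21, a22) := A in
  let: (b11, b12, b21, b22) := B in
  (lp_add (lp_comp a11 b11) (lp_comp a12 b21),
   lp_add (lp_comp a11 b12) (lp_comp a12 b22),
   lp_add (lp_comp a21 b11) (lp_comp a22 b21),
   lp_add (lp_comp a21 b12) (lp_comp a22 b22)).

Definition cost_lmat_comp (A B : lmat) : nat :=
  let: (a11, a12, a21, a22) := A in
  let: (b11, b12, b21, b22) := B in
  (cost_comp a11 b11 + cost_comp a12 b21
     + cost_add (lp_comp a11 b11) (lp_comp a12 b21)
   + cost_comp a11 b12 + cost_comp a12 b22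
     + cost_add (lp_comp a11 b12) (lp_comp a12 b22)
   + cost_comp a21 b11 + cost_comp a22 b21
     + cost_add (lp_comp a21 b11) (lp_comp a22 b21)
   + cost_comp a21 b12 + cost_comp a22 b22
     + cost_add (lp_comp a21 b12) (lp_comp a22 b22))%N.

(* B_0 = [[x, 0], [0, x]] *)
Definition B0 : lmat := ([:: 1], [::], [::], [:: 1]).

(* Writing B = [[P, -K], [N, -D]]:  b11 = P, b12 = -K, b21 = N, b22 = -D,
   so Gamma = P(g) - K(r) = b11(g) + b12(r), Delta = b21(g) + b22(r), and
   qdeg D = qdeg b22.
   Cost of the new left factor: Gamma^(q-1) = Gamma^q * Gamma^-1 (2 ops)
   plus negations (at most 2 further ops); charged 4 in both branches. *)
Definition alg3_step (k : nat) (gi ri : L) (st : lmat * nat) : lmat * nat :=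
  let: (B, c) := st in
  let: (b11, b12, b21, b22) := B in
  let Gam := lp_eval b11 gi + lp_eval b12 ri in
  let Del := lp_eval b21 gi + lp_eval b22 ri in
  let cost_GD := (cost_eval b11 + cost_eval b12 + 1
                  + cost_eval b21 + cost_eval b22 + 1)%N in
  let M : lmat :=
    if (qdeg_le_shift b11 b22 k && (Gam != 0)) || (Del == 0) then
      ([:: - Gam ^+ (#|K|.-1); 1], [::], [:: Del], [:: - Gam])
    else
      ([:: Del], [:: - Gam], [::], [:: - Del ^+ (#|K|.-1); 1]) in
  (lmat_comp M B, (c + cost_GD + 4 + cost_lmat_comp M B)%N).

Definition alg3 (n k : nat) (g r : 'I_n -> L) : lmat * nat :=
  foldl (fun st i => alg3_step k (g i) (r i) st) (B0, 0%N) (enum 'I_n).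

Definition alg3_output n k (g r : 'I_n -> L) : lmat := (alg3 k g r).1.
Definition alg3_cost n k (g r : 'I_n -> L) : nat := (alg3 k g r).2.

End Algorithm3.

(* Every iteration of Algorithm 3 left-composes the current matrix with a
   matrix whose entries have at most two coefficients, so after i iterations
   all entries of B_i have at most i+1 coefficients.  Evaluating the four
   entries and forming the product then costs O(i) operations, and summing
   over the n iterations gives O(n^2). *)
From mathcomp Require Import all_boot all_order all_algebra all_field.
From mathcomp Require Import zify.

Set Implicit Arguments.
Unset Strict Implicit.
Unset Printing Implicit Defensive.

Section Algorithm3Cost.
Variables (K : finFieldType) (L : fieldExtType K).

Lemma size_lp_comp_le (f h : lpoly L) :
  (size (lp_comp f h) <= (size f + size h).-1)%N.
Proof. by rewrite size_mkseq /lp_size_comp; case: ifP. Qed.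

Lemma size_lp_add (f h : lpoly L) : size (lp_add f h) = maxn (size f) (size h).
Proof. exact: size_mkseq. Qed.

Lemma cost_comp_le (f h : lpoly L) : (cost_comp f h <= 2 * (size f * size h))%N.
Proof. rewrite /cost_comp; lia. Qed.

Lemma cost_add_le (f h : lpoly L) : (cost_add f h <= size f)%N.
Proof. rewrite /cost_add; lia. Qed.

Definition lmat_size_le (S : nat) (B : lmat L) : bool :=
  let: (b11, b12, b21, b22) := B in
  [&& size b11 <= S, size b12 <= S, size b21 <= S & size b22 <= S]%N.

Lemma lmat_comp_entry_bound (a1 a2 c1 c2 : lpoly L) (a b : nat) :
  (size a1 <= a)%N -> (size a2 <= a)%N -> (size c1 <= b)%N -> (size c2 <= b)%N ->
  (size (lp_add (lp_comp a1 c1) (lp_comp a2 c2)) <= (a + b).-1)%N /\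
  (cost_comp a1 c1 + cost_comp a2 c2 + cost_add (lp_comp a1 c1) (lp_comp a2 c2)
     <= 4 * (a * b) + (a + b).-1)%N.
Proof.
move=> a1a a2a c1b c2b.
have s1 := size_lp_comp_le a1 c1; have s2 := size_lp_comp_le a2 c2.
have k1 := cost_comp_le a1 c1; have k2 := cost_comp_le a2 c2.
have kadd := cost_add_le (lp_comp a1 c1) (lp_comp a2 c2).
have m1 : (size a1 * size c1 <= a * b)%N by exact: leq_mul.
have m2 : (size a2 * size c2 <= a * b)%N by exact: leq_mul.
rewrite size_lp_add; split; lia.
Qed.

Lemma lmat_comp_bound (A B : lmat L) (a b : nat) :
  lmat_size_le a A -> lmat_size_le b B ->
  lmat_size_le (a + b).-1 (lmat_comp A B) /\
  (cost_lmat_comp A B <= 4 * (4 * (a * b) + (a + b).-1))%N.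
Proof.
case: A => [[[a11 a12] a21] a22]; case: B => [[[b11 b12] b21] b22] /=.
case/and4P=> A11 A12 A21 A22; case/and4P=> B11 B12 B21 B22.
have [s11 c11] := lmat_comp_entry_bound A11 A12 B11 B21.
have [s12 c12] := lmat_comp_entry_bound A11 A12 B12 B22.
have [s21 c21] := lmat_comp_entry_bound A21 A22 B11 B21.
have [s22 c22] := lmat_comp_entry_bound A21 A22 B12 B22.
by split; [rewrite s11 s12 s21 s22 | lia].
Qed.

Lemma cost_eval_le (f : lpoly L) (S : nat) :
  (size f <= S)%N -> (cost_eval f <= 2 * S)%N.
Proof. rewrite /cost_eval; lia. Qed.

Lemma alg3_step_bound (k : nat) (gi ri : L) (B : lmat L) (c S : nat) :
  lmat_size_le S B ->
  lmat_size_le S.+1 (alg3_step k gi ri (B, c)).1 /\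
  ((alg3_step k gi ri (B, c)).2 <= c + (44 * S + 10))%N.
Proof.
case: B => [[[b11 b12] b21] b22] hB /=.
set M := (if _ then _ else _).
have hM : lmat_size_le 2 M by rewrite /M; case: ifP.
have [sMB cMB] := lmat_comp_bound hM hB.
case/and4P: hB => /cost_eval_le e11 /cost_eval_le e12
                  /cost_eval_le e21 /cost_eval_le e22.
split; [exact: sMB | lia].
Qed.

Lemma alg3_foldl_bound (T : Type) (k : nat) (g r : T -> L) (l : seq T)
    (B : lmat L) (c S : nat) :
  lmat_size_le S B ->
  ((foldl (fun st i => alg3_step k (g i) (r i) st) (B, c) l).2
     <= c + size l * (44 * (S + size l).-1 + 10))%N.
Proof.
elim: l B c S => [|i l IHl] B c S hB; first by rewrite /=; lia.
have [hB' hc'] := alg3_step_bound k (g i) (r i) c hB.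
change ((foldl (fun st i => alg3_step k (g i) (r i) st)
               (alg3_step k (g i) (r i) (B, c)) l).2
          <= c + (size l).+1 * (44 * (S + (size l).+1).-1 + 10))%N.
move: hB' hc'; case: (alg3_step _ _ _ _) => B' c' /= hB' hc'.
apply: leq_trans (IHl B' c' S.+1 hB') _.
rewrite addSn addnS /=.
have S_le : (S <= S + size l)%N by exact: leq_addr.
set X := (S + size l)%N in S_le *.
rewrite mulSn; lia.
Qed.

End Algorithm3Cost.

Theorem proposition39 :
  exists C : nat,
    forall (K : finFieldType) (L : fieldExtType K) (n k : nat)
           (g r : 'I_n -> L),
      (1 <= k <= n)%N ->
      free [seq g i | i <- enum 'I_n] ->
      (alg3_cost k g r <= C * n ^ 2)%N.
Proof.
exists 54 => K L n k g r /andP [k_gt0 k_le_n] _.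
have hB0 : lmat_size_le 1 (B0 L) by [].
have := alg3_foldl_bound k g r (enum 'I_n) 0%N hB0.
rewrite size_enum_ord add1n /= => cost_le.
apply: leq_trans cost_le _.
have n_le_sq : (n <= n * n)%N by rewrite leq_pmull // (leq_trans k_gt0).
rewrite expnS expn1; lia.
Qed.
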